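(* Let $z_1,\dots,z_n\in\mathbb C$ be pairwise distinct and $\mu_1,\dots,\mu_n$ variables; set $f_a(x)=(x+\mu_a)e^{z_ax}$ and $h_a=-\mu_a-\sum_{b\ne a}\frac1{z_a-z_b}$, $a=1,\dots,n$. Let $$W(u,x)=e^{-ux-\sum_{a=1}^nz_ax}\,\mathrm{Wr}[f_1(x),\dots,f_n(x),e^{ux}],\qquad W_0(x)=e^{-\sum_{a=1}^nz_ax}\,\mathrm{Wr}[f_1(x),\dots,f_n(x)].$$ Then $$W(u,x)=\Delta\cdot\det\bigl((u-Z)(x-Q)-1\bigr),\qquad W_0(x)=\Delta\cdot\det(x-Q).$$
   Context: For functions $g_1,\dots,g_m$ of $x$, $\mathrm{Wr}[g_1,\dots,g_m]=\det\bigl(g_k^{(l-1)}\bigr)_{k,l=1}^m$ is the Wronskian (derivatives in $x$). $\Delta=\prod_{1\le a<b\le n}(z_b-z_a)$. $Z=\mathrm{diag}(z_1,\dots,z_n)$, and $Q$ is the $n\times n$ matrix with $Q_{aa}=h_a$ and $Q_{ab}=1/(z_b-z_a)$ for $a\ne b$. *)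

From HB Require Import structures.
From mathcomp Require Import all_boot all_order all_algebra.
From mathcomp Require Import complex.
From mathcomp Require Import reals.
From mathcomp.analysis Require Import normedtype sequences exp trigo derive.

Set Implicit Arguments.
Unset Strict Implicit.
Unset Printing Implicit Defensive.

Import Order.TTheory GRing.Theory Num.Theory.
Local Open Scope ring_scope.
Local Open Scope complex_scope.

Section Defs.
Variable R : realType.

Definition cexp (w : R[i]) : R[i] :=
  (expR (complex.Re w) * cos (complex.Im w)) +i* (expR (complex.Re w) * sin (complex.Im w)).

(* n-th derivative of g : C -> C at the point w, computed along the real
   direction: d^n/dt^n g(w + t) at t = 0 (real and imaginary parts
   separately).  For holomorphic g this is the complex derivative g^(n)(w). *)
Definition cderivn (n : nat) (g : R[i] -> R[i]) (w : R[i]) : R[i] :=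
  (derive1n n (fun t : R => complex.Re (g (w + t%:C)) : R^o) 0)
  +i* (derive1n n (fun t : R => complex.Im (g (w + t%:C)) : R^o) 0).

Definition wronskian (m : nat) (g : 'I_m -> R[i] -> R[i]) (x : R[i]) : R[i] :=
  \det (\matrix_(k < m, l < m) cderivn l (g k) x).

Variable n : nat.

Definition Delta (z : 'I_n -> R[i]) : R[i] :=
  \prod_(a < n) \prod_(b < n | (a < b)%N) (z b - z a).

Definition fa (z mu : 'I_n -> R[i]) (a : 'I_n) : R[i] -> R[i] :=
  fun x => (x + mu a) * cexp (z a * x).

Definition ha (z mu : 'I_n -> R[i]) (a : 'I_n) : R[i] :=
  - mu a - \sum_(b < n | b != a) (z a - z b)^-1.

Definition Zmat (z : 'I_n -> R[i]) : 'M[R[i]]_n :=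
  \matrix_(a < n, b < n) (if a == b then z a else 0).

Definition Qmat (z mu : 'I_n -> R[i]) : 'M[R[i]]_n :=
  \matrix_(a < n, b < n) (if a == b then ha z mu a else (z b - z a)^-1).

Definition fam_u (z mu : 'I_n -> R[i]) (u : R[i]) (k : 'I_n.+1) : R[i] -> R[i] :=
  match unlift ord_max k with
  | Some a => fa z mu a
  | None => fun x => cexp (u * x)
  end.

Definition Wux (z mu : 'I_n -> R[i]) (u x : R[i]) : R[i] :=
  cexp (- (u * x) - \sum_(a < n) z a * x) * wronskian (fam_u z mu u) x.

Definition W0 (z mu : 'I_n -> R[i]) (x : R[i]) : R[i] :=
  cexp (- \sum_(a < n) z a * x) * wronskian (fa z mu) x.

End Defs.

(* The k-th derivative of (x + mu) e^(z x) is e^(z x) (z^k (x + mu) + k z^(k-1)),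
   so after removing the exponential factors both Wronskians are determinants
   of matrices (z_a^l c_a + l z_a^(l-1) d_a)_(a,l).  Writing P_b for the
   product of the X - z_c with c <> b, Lagrange interpolation of X^l and of
   its derivative on the nodes z_a factors such a matrix as
     diag(P_a(z_a)) (diag(c) + diag(d) C) diag(P_b(z_b))^-1 Vandermonde^T,
   where C is the Cauchy-like matrix with C_ab = 1/(z_a - z_b) off the
   diagonal and C_aa = sum_(c <> a) 1/(z_a - z_c).  With c_a = x + mu_a and
   d_a = 1 this gives W_0.  For W, adjoin u as an extra node with c = 1,
   d = 0 and expand along its row; this proves the identity for u distinct
   from the z_a, and both sides are polynomials in u. *)
From HB Require Import structures.
From mathcomp Require Import all_boot all_order all_algebra.
From mathcomp Require Import complex.
From mathcomp Require Import reals.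
From mathcomp.analysis Require Import normedtype sequences exp trigo derive realfun.
From mathcomp Require Import boolp functions ring zify.
Import Order.TTheory GRing.Theory Num.Theory.
Import numFieldNormedType.Exports.

Set Implicit Arguments.
Unset Strict Implicit.
Unset Printing Implicit Defensive.
Local Open Scope ring_scope.

Section LinExpCoef.
Variable F : comRingType.

(* The l-th derivative at t = 0 of (c + t d) e^(z t). *)
Definition linexp_coef (c d z : F) (l : nat) := z ^+ l * c + l%:R * z ^+ l.-1 * d.

Lemma linexp_coefS c d z l :
  linexp_coef c d z l.+1 = z * linexp_coef c d z l + z ^+ l * d.
Proof.
rewrite /linexp_coef; case: l => [|l] /=; first by rewrite expr1 mulr1; ring.
by rewrite !exprS -!natr1; ring.
Qed.

Lemma linexp_coefMr c d z k l :
  linexp_coef (c * k) (d * k) z l = linexp_coef c d z l * k.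
Proof. by rewrite /linexp_coef; ring. Qed.

End LinExpCoef.

Lemma deriv_prod_XsubC (F : fieldType) (I : Type) (r : seq I) (f : I -> F) t :
  all (fun i => t != f i) r ->
  (\prod_(i <- r) ('X - (f i)%:P))^`().[t] =
  (\prod_(i <- r) (t - f i)) * \sum_(i <- r) (t - f i)^-1.
Proof.
elim: r => [|i r IH] /=; first by rewrite !big_nil derivC horner0 mulr0.
move=> /andP[ti hr]; rewrite !big_cons derivM derivXsubC mul1r hornerD hornerM IH //.
rewrite hornerXsubC horner_prod.
under eq_bigr => j _ do rewrite hornerXsubC.
have ti_neq0 : t - f i != 0 by rewrite subr_eq0.
set P := \prod_(_ <- _) _; set S := \sum_(_ <- _) _.
by field.
Qed.

Section Interpolation.
Variables (F : fieldType) (m : nat) (w : 'I_m -> F).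
Hypothesis w_inj : injective w.

Definition node_poly (b : 'I_m) : {poly F} := \prod_(c < m | c != b) ('X - (w c)%:P).

Definition node_weight b := (node_poly b).[w b].

Definition cauchy_coef a b :=
  if a == b then \sum_(c < m | c != a) (w a - w c)^-1 else (w a - w b)^-1.

Lemma node_weight_neq0 b : node_weight b != 0.
Proof.
rewrite /node_weight /node_poly horner_prod; apply/prodf_neq0 => c cb.
by rewrite hornerXsubC subr_eq0 (inj_eq w_inj) eq_sym.
Qed.

Lemma node_poly_root a b : a != b -> (node_poly b).[w a] = 0.
Proof. by move=> ab; rewrite horner_prod (bigD1 a) //= hornerXsubC subrr mul0r. Qed.

Lemma size_node_poly b : (size (node_poly b) <= m)%N.
Proof.
rewrite /node_poly -big_filter size_prod_XsubC.
rewrite deprecated_filter_index_enum -cardE.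
have -> : #|[pred i : 'I_m | i != b]| = #|predC1 b| by apply: eq_card.
by rewrite cardC1 card_ord; case: (m) b => // [[]].
Qed.

Lemma lagrange_interp (p : {poly F}) : (size p <= m)%N ->
  p = \sum_b (p.[w b] / node_weight b)%:P * node_poly b.
Proof.
move=> sp; apply/eqP; rewrite -subr_eq0; apply/eqP.
apply: (@roots_geq_poly_eq0 _ _ [seq w b | b <- enum 'I_m]).
- apply/allP => _ /mapP[a _ ->]; rewrite /root hornerD hornerN horner_sum.
  rewrite (bigD1 a) //= big1 ?addr0.
    by rewrite hornerM hornerC mulfVK ?node_weight_neq0 // subrr.
  by move=> b ba; rewrite hornerM node_poly_root ?mulr0 // eq_sym.
- by rewrite map_inj_uniq ?enum_uniq.
- rewrite size_map size_enum_ord.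
  apply: (leq_trans (size_polyD _ _)); rewrite geq_max sp /= size_polyN.
  apply: (leq_trans (size_sum _ _ _)).
  apply/bigmax_leqP => b _; rewrite mul_polyC.
  exact: leq_trans (size_scale_leq _ _) (size_node_poly b).
Qed.

Lemma deriv_node_poly a b :
  (node_poly b)^`().[w a] = node_weight a * cauchy_coef a b.
Proof.
rewrite /cauchy_coef; case: eqP => [<-|/eqP ab].
  rewrite /node_poly -big_filter deriv_prod_XsubC; last first.
    apply/allP => c; rewrite mem_filter => /andP[ca _].
    by rewrite (inj_eq w_inj) eq_sym.
  rewrite big_filter /node_weight /node_poly horner_prod big_filter.
  by congr (_ * _); apply: eq_bigr => c _; rewrite hornerXsubC.
rewrite /node_poly (bigD1 a) //=.
rewrite derivM derivXsubC mul1r hornerD hornerM hornerXsubC subrr mul0r addr0.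
rewrite /node_weight /node_poly [in RHS](bigD1 b) ?(eq_sym b) //=.
rewrite hornerM hornerXsubC mulrAC mulfV ?mul1r ?subr_eq0 ?(inj_eq w_inj) //.
by congr horner; apply: eq_bigl => c; rewrite andbC.
Qed.

(* Differentiate the interpolation formula for X^l and evaluate at w a. *)
Lemma deriv_monomial_interp a l : (l < m)%N ->
  l%:R * w a ^+ l.-1 =
  \sum_b (w b ^+ l / node_weight b) * (node_weight a * cauchy_coef a b).
Proof.
move=> lm.
have sXl : (size ('X^l : {poly F}) <= m)%N by rewrite size_polyXn.
have := congr1 (fun p => p^`().[w a]) (lagrange_interp sXl).
rewrite derivXn hornerMn hornerXn -mulr_natl => ->.
rewrite raddf_sum horner_sum; apply: eq_bigr => b _.
by rewrite /= deriv_mulC hornerM hornerC hornerXn deriv_node_poly.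
Qed.

Lemma det_linexp_coef (c d : 'I_m -> F) :
  \det (\matrix_(a < m, l < m) linexp_coef (c a) (d a) (w a) l) =
  (\prod_(a < m) \prod_(b < m | (a < b)%N) (w b - w a)) *
  \det (\matrix_(a < m, b < m) ((a == b)%:R * c a + d a * cauchy_coef a b)).
Proof.
set G := \matrix_(a < m, b < m) (_ + _).
set V := \matrix_(b < m, l < m) (w b ^+ l / node_weight b).
have factor_G : \matrix_(a < m, l < m) linexp_coef (c a) (d a) (w a) l =
                diag_mx (\row_a node_weight a) *m G *m V.
  apply/matrixP => a l; rewrite mul_diag_mx !mxE.
  under eq_bigr => b _ do rewrite !mxE mulrDr mulrDl.
  rewrite big_split /= (bigD1 a) //= big1 ?addr0; last first.
    by move=> b ba; rewrite eq_sym (negPf ba) mul0r mulr0 mul0r.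
  rewrite eqxx mul1r /linexp_coef (deriv_monomial_interp a (ltn_ord l)).
  have k_neq0 := node_weight_neq0 a.
  rewrite mulr_suml; congr (_ + _); first by field.
  by apply: eq_bigr => b _; ring.
have factor_V : V = diag_mx (\row_b (node_weight b)^-1) *m (Vandermonde m (\row_j w j))^T.
  by apply/matrixP => b l; rewrite mul_diag_mx !mxE mulrC.
rewrite factor_G factor_V !det_mulmx !det_diag det_tr det_Vandermonde.
have weights_cancel : \prod_(i < m) (\row_a node_weight a) 0 i *
                      \prod_(i < m) (\row_b (node_weight b)^-1) 0 i = 1.
  rewrite -big_split /=; apply: big1 => i _; rewrite !mxE mulfV //.
  exact: node_weight_neq0.
rewrite mulrAC mulrA weights_cancel mul1r; congr (_ * _).
by apply: eq_bigr => i _; apply: eq_bigr => j _; rewrite !mxE.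
Qed.

End Interpolation.

Arguments cauchy_coef {F m}.

Lemma poly_eq0_cofinite (F : numDomainType) (p : {poly F}) (s : seq F) :
  (forall x, x \notin s -> p.[x] = 0) -> p = 0.
Proof.
move=> p_s; pose t := [seq (i%:R : F) | i <- iota 0 (size p + size s)].
have t_uniq : uniq t.
  by rewrite map_inj_uniq ?iota_uniq // => i j /eqP; rewrite eqr_nat => /eqP.
apply: (@roots_geq_poly_eq0 _ _ [seq y <- t | y \notin s]).
- by apply/allP => y; rewrite mem_filter => /andP[ys _]; apply/eqP/p_s.
- exact: filter_uniq.
- have in_s : (count (predC (fun y => y \notin s)) t <= size s)%N.
    rewrite -size_filter; apply: uniq_leq_size; first exact: filter_uniq.
    by move=> y; rewrite mem_filter /= negbK => /andP[].
  have := count_predC (fun y => y \notin s) t.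
  rewrite size_filter size_map size_iota => e.
  by rewrite -(leq_add2r (size s)) -{1}e leq_add2l.
Qed.

Lemma det_scale_rows (F : comRingType) m (k : 'I_m -> F) (A : 'I_m -> 'I_m -> F) :
  \det (\matrix_(i, j) (k i * A i j)) = (\prod_i k i) * \det (\matrix_(i, j) A i j).
Proof.
have -> : \matrix_(i, j) (k i * A i j) = diag_mx (\row_i k i) *m \matrix_(i, j) A i j.
  by rewrite mul_diag_mx; apply/matrixP => i j; rewrite !mxE.
by rewrite det_mulmx det_diag; congr (_ * _); apply: eq_bigr => i _; rewrite mxE.
Qed.

Section RealDerivatives.
Variable R : realType.

Lemma is_derive_affine (a b t : R) : is_derive t 1 (fun t : R => a * t + b : R^o) a.
Proof. by apply: is_derive_eq; rewrite scaler1 addr0. Qed.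

Lemma is_derive_comp_affine (f f' : R -> R^o) (a b t : R) :
  (forall s : R, is_derive s 1 f (f' s)) ->
  is_derive t 1 (fun t => f (a * t + b)) (a * f' (a * t + b)).
Proof.
move=> df; have := @is_derive1_comp R f _ t _ _ (df _) (is_derive_affine a b t).
by move/is_derive_eq; apply; rewrite mulrC.
Qed.

Variables (al be ga de : R).

Definition linexp_trig (p q r s : R) (t : R) : R :=
  (q * t + p) * (expR (al * t + be) * cos (ga * t + de)) +
  (s * t + r) * (expR (al * t + be) * sin (ga * t + de)).

Lemma derive1_linexp_trig p q r s :
  derive1 (linexp_trig p q r s : R -> R^o) =
  linexp_trig (q + al * p + ga * r) (al * q + ga * s) (s + al * r - ga * p)
              (al * s - ga * q).
Proof.
apply/funext => t; rewrite derive1E.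
have dE := is_derive_comp_affine al be t (fun s => is_derive_expR s).
have dC := is_derive_comp_affine ga de t (fun s => is_derive_cos s).
have dS := is_derive_comp_affine ga de t (fun s => is_derive_sin s).
apply: derive_val.
apply: (is_derive_eq (is_deriveD (is_deriveM (is_derive_affine q p t) (is_deriveM dE dC))
                                 (is_deriveM (is_derive_affine s r t) (is_deriveM dE dS)))).
rewrite /linexp_trig /= /GRing.scale /=.
set E := expR _; set C := cos _; set S := sin _.
by rewrite !mulrfctE -/E -/C -/S; ring.
Qed.

End RealDerivatives.

Arguments linexp_trig {R}.

Local Open Scope complex_scope.

Section ComplexLinExp.
Variable R : realType.

Lemma cexpD (a b : R[i]) : cexp (a + b) = cexp a * cexp b.
Proof.
case: a => ar ai; case: b => br bi; rewrite /cexp /= expRD cosD sinD.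
by apply/eqP; rewrite eq_complex /=; apply/andP; split; apply/eqP; ring.
Qed.

Lemma cexp0 : cexp (0 : R[i]) = 1.
Proof. by rewrite /cexp /= expR0 cos0 sin0 mulr1 mulr0. Qed.

Lemma cexp_sum (I : Type) (r : seq I) (P : pred I) (f : I -> R[i]) :
  cexp (\sum_(i <- r | P i) f i) = \prod_(i <- r | P i) cexp (f i).
Proof. exact: (big_morph _ cexpD cexp0). Qed.

Lemma Re_mulNi (w : R[i]) : complex.Re (w * - 'i) = complex.Im w.
Proof. by case: w => a b /=; ring. Qed.

Definition linexp (c d z e : R[i]) (t : R) : R[i] := (c + t%:C * d) * cexp (z * t%:C + e).

Lemma Re_linexpE c d z e :
  (fun t => complex.Re (linexp c d z e t) : R^o) =
  linexp_trig (complex.Re z) (complex.Re e) (complex.Im z) (complex.Im e)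
    (complex.Re c) (complex.Re d) (- complex.Im c) (- complex.Im d).
Proof.
apply/funext => t; case: c => cr ci; case: d => dr di; case: z => zr zi; case: e => er ei.
by rewrite /linexp /linexp_trig /cexp /= !mulr0 !mul0r !subr0 !addr0 !add0r; ring.
Qed.

Lemma derive1_Re_linexp c d z e :
  derive1 (fun t => complex.Re (linexp c d z e t) : R^o) =
  (fun t => complex.Re (linexp (d + z * c) (z * d) z e t)).
Proof.
rewrite !Re_linexpE derive1_linexp_trig.
by case: c => cr ci; case: d => dr di; case: z => zr zi; case: e => er ei /=; congr linexp_trig; ring.
Qed.

Lemma derive1n_Re_linexp l c d z e :
  derive1n l (fun t => complex.Re (linexp c d z e t) : R^o) =
  (fun t => complex.Re (linexp (linexp_coef c d z l) (z ^+ l * d) z e t)).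
Proof.
elim: l => [|l IH]; first by rewrite derive1n0 /linexp_coef !expr0 !mul1r !mul0r addr0.
rewrite derive1nS IH derive1_Re_linexp linexp_coefS exprS mulrA.
by rewrite addrC.
Qed.

Lemma Im_linexpE c d z e t :
  complex.Im (linexp c d z e t) = complex.Re (linexp (c * - 'i) (d * - 'i) z e t).
Proof. by rewrite -Re_mulNi /linexp; congr complex.Re; ring. Qed.

Lemma cderivn_linexp l (g : R[i] -> R[i]) x c d z e :
  (forall t : R, g (x + t%:C) = linexp c d z e t) ->
  cderivn l g x = linexp_coef c d z l * cexp e.
Proof.
move=> gE; rewrite /cderivn.
have -> : (fun t : R => complex.Re (g (x + t%:C)) : R^o) =
          (fun t => complex.Re (linexp c d z e t)) by apply/funext => t; rewrite gE.
have -> : (fun t : R => complex.Im (g (x + t%:C)) : R^o) =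
          (fun t => complex.Re (linexp (c * - 'i) (d * - 'i) z e t)).
  by apply/funext => t; rewrite gE Im_linexpE.
rewrite !derive1n_Re_linexp linexp_coefMr /linexp (_ : (0 : R)%:C = 0) //.
rewrite !mul0r mulr0 !addr0 add0r mulrAC Re_mulNi.
by case: (_ * _).
Qed.

End ComplexLinExp.

Lemma unlift_lift_max m (i : 'I_m) : unlift ord_max (lift ord_max i) = Some i.
Proof. exact: liftK. Qed.

Section Wronskians.
Variables (R : realType) (n : nat) (z mu : 'I_n -> R[i]).

Lemma cderivn_fa a l x :
  cderivn l (fa z mu a) x = linexp_coef (x + mu a) 1 (z a) l * cexp (z a * x).
Proof.
by apply: cderivn_linexp => t; rewrite /fa /linexp mulr1 addrAC mulrDr [z a * x + _]addrC.
Qed.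

Lemma cderivn_cexp u l (x : R[i]) :
  cderivn l (fun x => cexp (u * x)) x = linexp_coef 1 0 u l * cexp (u * x).
Proof.
by apply: cderivn_linexp => t; rewrite /linexp mulr0 addr0 mul1r mulrDr [u * x + _]addrC.
Qed.

Lemma W0_det_linexp_coef x :
  W0 z mu x = \det (\matrix_(a < n, l < n) linexp_coef (x + mu a) 1 (z a) l).
Proof.
rewrite /W0 /wronskian.
have -> : \matrix_(k < n, l < n) cderivn l (fa z mu k) x =
          \matrix_(k < n, l < n) (cexp (z k * x) * linexp_coef (x + mu k) 1 (z k) l).
  by apply/matrixP => k l; rewrite !mxE cderivn_fa mulrC.
by rewrite det_scale_rows mulrA -cexp_sum -cexpD addNr cexp0 mul1r.
Qed.

Lemma Qmat_cauchyE x :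
  x%:M - Qmat z mu =
  \matrix_(a, b) ((a == b)%:R * (x + mu a) + 1 * cauchy_coef z a b).
Proof.
apply/matrixP => a b; rewrite !mxE /cauchy_coef /ha mul1r.
have [->|ab] := eqVneq a b; first by rewrite /=; ring.
by rewrite -[(z b - z a)^-1]opprK -invrN opprB /=; ring.
Qed.

Definition nodes_u u (k : 'I_n.+1) := if unlift ord_max k is Some a then z a else u.
Definition coefc_u x (k : 'I_n.+1) := if unlift ord_max k is Some a then x + mu a else 1.
Definition coefd_u (k : 'I_n.+1) : R[i] := if unlift ord_max k is Some _ then 1 else 0.

Lemma Wux_det_linexp_coef u x :
  Wux z mu u x =
  \det (\matrix_(k, l) linexp_coef (coefc_u x k) (coefd_u k) (nodes_u u k) l).
Proof.
rewrite /Wux /wronskian.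
have -> : \matrix_(k < n.+1, l < n.+1) cderivn l (fam_u z mu u k) x =
          \matrix_(k, l) (cexp (nodes_u u k * x) *
                          linexp_coef (coefc_u x k) (coefd_u k) (nodes_u u k) l).
  apply/matrixP => k l; rewrite !mxE /fam_u /nodes_u /coefc_u /coefd_u.
  by case: (unlift ord_max k) => [a|]; rewrite ?cderivn_fa ?cderivn_cexp mulrC.
rewrite det_scale_rows mulrA -cexp_sum -cexpD (bigD1_ord ord_max) //= /nodes_u unlift_none.
have -> : \sum_(i < n) (if unlift ord_max (lift ord_max i) is Some a then z a else u) * x =
          \sum_(a < n) z a * x by apply: eq_bigr => a _; rewrite unlift_lift_max.
by rewrite -opprD addNr cexp0 mul1r.
Qed.

Section GenericU.
Variables (u x : R[i]).
Hypothesis z_inj : injective z.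
Hypothesis u_notin_z : forall a, u != z a.

Lemma nodes_u_inj : injective (nodes_u u).
Proof.
move=> k1 k2; rewrite /nodes_u.
case: unliftP => [a1 ->|->]; case: unliftP => [a2 ->|->] //.
- by move/z_inj ->.
- by move=> e; have := u_notin_z a1; rewrite e eqxx.
- by move=> e; have := u_notin_z a2; rewrite e eqxx.
Qed.

Lemma Delta_nodes_u : Delta (nodes_u u) = Delta z * \prod_(a < n) (u - z a).
Proof.
rewrite /Delta (bigD1_ord ord_max) //= big_pred0; last first.
  by move=> b; rewrite ltnNge -ltnS ltn_ord.
rewrite mul1r -big_split /=; apply: eq_bigr => a _.
rewrite (bigD1_ord ord_max); last by have := ltn_ord a; rewrite /bump /=; lia.
rewrite /nodes_u unlift_none !liftK mulrC; congr (_ * _); apply: eq_big => b.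
  by rewrite lift_max /bump (leqNgt n a) ltn_ord.
by move=> _; rewrite liftK.
Qed.

Lemma cauchy_coef_nodes_u_diag j :
  cauchy_coef (nodes_u u) (lift ord_max j) (lift ord_max j) =
  (z j - u)^-1 + \sum_(c < n | c != j) (z j - z c)^-1.
Proof.
rewrite /cauchy_coef eqxx (bigD1_ord ord_max) ?neq_lift //.
rewrite /nodes_u unlift_none liftK; congr (_ + _).
apply: eq_big => c; first by rewrite (inj_eq lift_inj).
by move=> _; rewrite !liftK.
Qed.

Lemma det_cauchy_nodes_u :
  \det (\matrix_(a, b) ((a == b)%:R * coefc_u x a +
                        coefd_u a * cauchy_coef (nodes_u u) a b)) =
  \det (\matrix_(i < n, j < n) ((x%:M - Qmat z mu) i j - (i == j)%:R / (u - z i))).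
Proof.
rewrite (expand_det_row _ ord_max) (bigD1 ord_max) //= big1 ?addr0; last first.
  move=> j jn; rewrite !mxE /coefc_u /coefd_u unlift_none eq_sym (negPf jn).
  by rewrite !mul0r add0r mul0r.
rewrite !mxE /coefc_u /coefd_u unlift_none eqxx mul0r addr0 mulr1 /= mulr1n mul1r.
rewrite /cofactor -signr_odd addnn odd_double expr0 mul1r.
congr (\det _); apply/matrixP => i j.
rewrite !mxE /coefc_u /coefd_u !liftK (inj_eq lift_inj).
have [->|ij] := eqVneq i j.
  by rewrite cauchy_coef_nodes_u_diag /ha -[z j - u]opprB invrN /=; ring.
rewrite /cauchy_coef (inj_eq lift_inj) (negPf ij) /nodes_u !liftK.
by rewrite -[z j - z i]opprB invrN /=; ring.
Qed.

Lemma det_uZ_xQ_sub1 : \det ((u%:M - Zmat z) *m (x%:M - Qmat z mu) - 1%:M) =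
  (\prod_(a < n) (u - z a)) *
  \det (\matrix_(i < n, j < n) ((x%:M - Qmat z mu) i j - (i == j)%:R / (u - z i))).
Proof.
rewrite -det_scale_rows; congr (\det _); apply/matrixP => i j.
rewrite !mxE (bigD1 i) //= big1 ?addr0; last first.
  by move=> k ik; rewrite !mxE eq_sym (negPf ik) /= subr0 mul0r.
rewrite !mxE eqxx /=.
have [->|ij] := eqVneq i j; rewrite ?eqxx /=.
  have uj : u - z j != 0 by rewrite subr_eq0.
  by field.
have ui : u - z i != 0 by rewrite subr_eq0.
have zij : z j - z i != 0 by rewrite subr_eq0 (inj_eq z_inj) eq_sym.
by field; rewrite ui zij.
Qed.

Lemma det_linexp_coef_nodes_u_notin :
  \det (\matrix_(k, l) linexp_coef (coefc_u x k) (coefd_u k) (nodes_u u k) l) =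
  Delta z * \det ((u%:M - Zmat z) *m (x%:M - Qmat z mu) - 1%:M).
Proof.
rewrite (det_linexp_coef nodes_u_inj) -/(Delta (nodes_u u)) Delta_nodes_u.
by rewrite det_cauchy_nodes_u det_uZ_xQ_sub1 mulrA.
Qed.

End GenericU.

(* Both sides of det_linexp_coef_nodes_u_notin are values at u of polynomials in u. *)
Lemma det_linexp_coef_nodes_u x : injective z -> forall u,
  \det (\matrix_(k, l) linexp_coef (coefc_u x k) (coefd_u k) (nodes_u u k) l) =
  Delta z * \det ((u%:M - Zmat z) *m (x%:M - Qmat z mu) - 1%:M).
Proof.
move=> z_inj.
pose LM : 'M[{poly R[i]}]_(n.+1) := \matrix_(k, l)
  (if unlift ord_max k is Some a then (linexp_coef (x + mu a) 1 (z a) l)%:P else 'X^l).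
pose RM : 'M[{poly R[i]}]_n := \matrix_(a, b)
  (('X - (z a)%:P) * ((x%:M - Qmat z mu) a b)%:P - ((a == b)%:R)%:P).
have LM_at u : (\det LM).[u] =
    \det (\matrix_(k, l) linexp_coef (coefc_u x k) (coefd_u k) (nodes_u u k) l).
  rewrite -horner_evalE -det_map_mx; congr (\det _); apply/matrixP => k l.
  rewrite !mxE /coefc_u /coefd_u /nodes_u.
  case: (unlift ord_max k) => [a|] /=; first by rewrite horner_evalE hornerC.
  by rewrite horner_evalE hornerXn /linexp_coef mulr1 mulr0 addr0.
have RM_at u : ((Delta z)%:P * \det RM).[u] =
    Delta z * \det ((u%:M - Zmat z) *m (x%:M - Qmat z mu) - 1%:M).
  rewrite hornerM hornerC -horner_evalE -det_map_mx; congr (_ * \det _).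
  apply/matrixP => i j; rewrite !mxE (bigD1 i) //= big1 ?addr0; last first.
    by move=> k ik; rewrite !mxE eq_sym (negPf ik) /= subr0 mul0r.
  rewrite !mxE eqxx /= horner_evalE hornerD hornerN hornerM hornerXsubC !hornerC.
  by rewrite mulr1n.
have LM_RM : \det LM - (Delta z)%:P * \det RM = 0.
  apply: (@poly_eq0_cofinite _ _ [seq z a | a <- enum 'I_n]) => u u_notin.
  rewrite hornerD hornerN LM_at RM_at det_linexp_coef_nodes_u_notin ?subrr // => a.
  by apply: contra u_notin => /eqP ->; apply: map_f; rewrite mem_enum.
by move=> u; rewrite -LM_at -RM_at; move/eqP: LM_RM; rewrite subr_eq0 => /eqP ->.
Qed.

End Wronskians.

Theorem lemma4p1 (R : realType) (n : nat) (z mu : 'I_n -> R[i]) :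
  injective z ->
  (forall u x : R[i],
      Wux z mu u x
      = Delta z * \det ((u%:M - Zmat z) *m (x%:M - Qmat z mu) - 1%:M)) /\
  (forall x : R[i], W0 z mu x = Delta z * \det (x%:M - Qmat z mu)).
Proof.
move=> z_inj; split => [u x|x].
  by rewrite Wux_det_linexp_coef det_linexp_coef_nodes_u.
by rewrite W0_det_linexp_coef (det_linexp_coef z_inj) Qmat_cauchyE.
Qed.
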